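(* Let $\Sigma$ be a finite nonempty alphabet, $L\subseteq\Sigma^*$ and $\kappa(L)=n\ge 1$. If $L$ is a right ideal or a prefix-closed language, then $\sigma(L)\le n^{n-1}$. This bound is tight: for $n=1$ whenever $|\Sigma|\ge 1$, for $n=2$ whenever $|\Sigma|\ge 2$, for $n=3$ whenever $|\Sigma|\ge 3$, and for $n\ge 4$ whenever $|\Sigma|\ge 4$, there is a language $L$ over $\Sigma$ of the respective type with $\kappa(L)=n$ and $\sigma(L)=n^{n-1}$. Moreover, these alphabet sizes cannot be reduced: over a smaller alphabet no such language with $\kappa(L)=n$ attains $\sigma(L)=n^{n-1}$.
   Context: For a language $L\subseteq\Sigma^*$ and $w\in\Sigma^*$, the (left) quotient is $w^{-1}L=\{x\in\Sigma^*: wx\in L\}$; the quotient complexity $\kappa(L)$ is the number of distinct quotients of $L$ (equal to the number of states of a minimal DFA of $L$). The syntactic congruence of $L$ is $x\approx_L y$ iff for all $u,v\in\Sigma^*$, $uxv\in L\Leftrightarrow uyv\in L$; the syntactic semigroup is $\Sigma^+/\approx_L$, and the syntactic complexity $\sigma(L)$ is its cardinality (equivalently, the number of transformations of the state set of a minimal DFA of $L$ induced by nonempty words). A language $L$ is a right ideal if it is nonempty and $L=L\Sigma^*$. It is prefix-closed if $w\in L$ implies every prefix of $w$ is in $L$. *)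

From mathcomp Require Import all_boot.
Set Implicit Arguments. Unset Strict Implicit. Unset Printing Implicit Defensive.

Definition lang (S : finType) := seq S -> Prop.

Definition quot (S : finType) (w : seq S) (L : lang S) : lang S :=
  fun x => L (w ++ x).

Definition lang_eq (S : finType) (L1 L2 : lang S) : Prop :=
  forall x, L1 x <-> L2 x.

Definition kappa (S : finType) (L : lang S) (n : nat) : Prop :=
  exists f : 'I_n -> seq S,
    (forall i j, lang_eq (quot (f i) L) (quot (f j) L) -> i = j) /\
    (forall w, exists i, lang_eq (quot w L) (quot (f i) L)).

Definition synt_eq (S : finType) (L : lang S) (x y : seq S) : Prop :=
  forall u v, L (u ++ x ++ v) <-> L (u ++ y ++ v).

(* sigma L = m : the syntactic semigroup Sigma^+ / ~_L has exactly m elements. *)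
Definition sigma (S : finType) (L : lang S) (m : nat) : Prop :=
  exists g : 'I_m -> seq S,
    (forall i, g i <> [::]) /\
    (forall i j, synt_eq L (g i) (g j) -> i = j) /\
    (forall w, w <> [::] -> exists i, synt_eq L w (g i)).

Definition right_ideal (S : finType) (L : lang S) : Prop :=
  (exists w, L w) /\ lang_eq L (fun w => exists u v, w = u ++ v /\ L u).

Definition prefix_closed (S : finType) (L : lang S) : Prop :=
  forall w x, L (w ++ x) -> L w.

(* The syntactic semigroup of L is the transition semigroup of its minimal
   automaton, whose n states are the quotients of L.  If L is a right ideal or
   is prefix-closed, one quotient is absorbing, so every transformation fixes
   this sink and there are at most n^(n-1) of them.  Conversely, on the states
   {sink} + 'I_(n-1), a cyclic rotation, a transposition, a letter sending one
   state to the sink and a letter merging two states generate every map fixing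
   the sink: injective such maps are permutations, and any other one factors
   through a merge followed by a map moving fewer states.  Accepting the sink
   alone, or every other state, yields a right ideal, or a prefix-closed
   language, reaching the bound.  When all n^(n-1) maps occur, the alphabet
   needs a permutation letter, a letter sending a live state to the sink
   (n >= 2), a letter identifying live states without killing any (n >= 3),
   and for n >= 4 a second permutation letter, because powers of a single
   permutation commute while two transpositions sharing a point do not. *)

From mathcomp Require Import all_boot all_fingroup all_algebra.
From mathcomp Require Import boolp zify.
Set Implicit Arguments. Unset Strict Implicit. Unset Printing Implicit Defensive.

(** * Transition semigroups *)

Definition merge (T : eqType) (x y q : T) : T := if q == x then y else q.

Section Runs.
Variables (S Q : finType) (act : S -> Q -> Q).

Definition run (q : Q) (w : seq S) : Q := foldl (fun q a => act a q) q w.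

Lemma run_cat q x y : run q (x ++ y) = run (run q x) y.
Proof. exact: foldl_cat. Qed.

Definition trans (w : seq S) : {ffun Q -> Q} := [ffun q => run q w].

Definition semigroup : {set {ffun Q -> Q}} :=
  [set t : {ffun Q -> Q} | `[< exists2 w, w != [::] & trans w = t >]].

Definition realizable (h : Q -> Q) := exists w, run^~ w =1 h.

Definition complete (z : Q) :=
  forall h : Q -> Q, h z = z -> exists2 w, w != [::] & run^~ w =1 h.

Definition fixing (z : Q) : {set {ffun Q -> Q}} := [set t : {ffun Q -> Q} | t z == z].

Lemma realizable_letter a : realizable (act a).
Proof. by exists [:: a]. Qed.

Lemma realizable_id : realizable id.
Proof. by exists [::]. Qed.

Lemma realizable_comp g h : realizable g -> realizable h -> realizable (h \o g).
Proof. by move=> [u hu] [v hv]; exists (u ++ v) => q; rewrite run_cat hu hv. Qed.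

Lemma realizable_eq g h : realizable g -> g =1 h -> realizable h.
Proof. by move=> [w hw] gh; exists w => q; rewrite hw gh. Qed.

Section Sink.
Variable z : Q.
Hypothesis sink : forall a, act a z = z.

Lemma run_sink w : run z w = z.
Proof. by elim: w => //= a w; rewrite sink. Qed.

Lemma semigroup_sub_fixing : semigroup \subset fixing z.
Proof.
by apply/subsetP => t; rewrite !inE => /asboolP[w _ <-]; rewrite ffunE run_sink.
Qed.

Lemma completeE : complete z <-> semigroup = fixing z.
Proof.
split=> [compl | eq_fix h hz].
  apply/eqP; rewrite eqEsubset semigroup_sub_fixing; apply/subsetP => t.
  rewrite !inE => /eqP tz; apply/asboolP.
  have [w w_ne hw] := compl t tz; exists w => //; apply/ffunP => q.
  by rewrite ffunE hw.
have : [ffun q => h q] \in semigroup by rewrite eq_fix inE ffunE hz.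
rewrite inE => /asboolP[w w_ne /ffunP hw]; exists w => // q.
by have := hw q; rewrite !ffunE.
Qed.

Lemma complete_of_realizable a : injective (act a) ->
  (forall h, h z = z -> realizable h) -> complete z.
Proof.
move=> inj_a realize h hz; have [g ag ga] := injF_bij inj_a.
have gz : g z = z by apply: inj_a; rewrite ga sink.
have [w hw] : realizable (h \o g) by apply: realize; rewrite /= gz.
by exists (a :: w) => // q; rewrite /= hw /= ag.
Qed.

End Sink.

Lemma complete_reachable z s0 : complete z -> s0 != z ->
  forall q, exists u, run s0 u = q.
Proof.
move=> compl s0z q; pose h r := if r == z then z else q.
have [w _ hw] : exists2 w, w != [::] & run^~ w =1 h by apply: compl; rewrite /h eqxx.
by exists w; rewrite hw /h (negPf s0z).
Qed.

End Runs.

Lemma card_fixing (Q : finType) (z : Q) : #|fixing z| = #|Q| ^ #|Q|.-1.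
Proof.
pose F (q : Q) : pred Q := if q == z then pred1 z else predT.
have -> : fixing z = [set t : {ffun Q -> Q} | t \in family F].
  apply/setP => t; rewrite !inE; apply/eqP/familyP => [tz q | /(_ z)].
    by rewrite /F; case: eqP => [->|]; rewrite ?inE ?tz.
  by rewrite /F eqxx => /eqP.
rewrite cardsE card_family foldrE big_map big_enum (bigD1 z) //= /F eqxx card1 mul1n.
rewrite (eq_bigr (fun _ => #|Q|)) => [|q /negPf ->]; last exact: eq_card.
by rewrite prod_nat_const cardC1.
Qed.

Lemma sigma_semigroup (S Q : finType) (act : S -> Q -> Q) (L : lang S) :
  (forall x y, synt_eq L x y <-> trans act x = trans act y) ->
  forall m, sigma L m <-> m = #|semigroup act|.
Proof.
move=> syntE m; split=> [[g [g_ne [g_inj g_onto]]] | ->].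
  have inj_g : injective (trans act \o g) by move=> i j /syntE /g_inj.
  suff -> : semigroup act = [set trans act (g i) | i in 'I_m].
    by rewrite card_imset // card_ord.
  apply/setP => t; rewrite inE; apply/asboolP/imsetP => [[w /eqP w_ne <-] | [i _ ->]].
    by have [i /syntE] := g_onto w w_ne; exists i.
  by exists (g i) => //; apply/eqP.
have word t : t \in semigroup act -> {w | w != [::] & trans act w = t}.
  by rewrite inE => /asboolP/cid2.
pose g i := s2val (word _ (enum_valP i)).
have trans_g i : trans act (g i) = enum_val i by rewrite /g (s2valP' (word _ _)).
exists g; split; [|split].
- by move=> i; apply/eqP; rewrite /g (s2valP (word _ _)).
- by move=> i j /syntE; rewrite !trans_g => /enum_val_inj.
move=> w /eqP w_ne.
have w_in : trans act w \in semigroup act by rewrite inE; apply/asboolP; exists w.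
by exists (enum_rank_in w_in (trans act w)); apply/syntE; rewrite trans_g enum_rankK_in.
Qed.

(** * Minimal automata and the upper bound *)

Section MinimalAutomaton.
Variables (S Q : finType) (act : S -> Q -> Q) (s0 : Q) (acc : pred Q) (L : lang S).
Hypothesis accepts : forall w, L w <-> acc (run act s0 w).
Hypothesis reachable : forall q, exists u, run act s0 u = q.
Hypothesis distinguishable :
  forall p q, p != q -> exists v, acc (run act p v) != acc (run act q v).

Lemma minimal_eq_run p q : (forall v, acc (run act p v) = acc (run act q v)) -> p = q.
Proof.
by move=> same; apply/eqP/negPn/negP => /distinguishable[v]; rewrite same eqxx.
Qed.

Lemma minimal_synt_eq x y : synt_eq L x y <-> trans act x = trans act y.
Proof.
split=> [xy | /ffunP xy u v]; last first.
  by rewrite !accepts !run_cat; have := xy (run act s0 u); rewrite !ffunE => ->.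
apply/ffunP => q; rewrite !ffunE; apply: minimal_eq_run => v.
have [u <-] := reachable q; apply/idP/idP; rewrite -!run_cat -!accepts; apply xy.
Qed.

Lemma minimal_kappa : kappa L #|Q|.
Proof.
pose word q := sval (cid (reachable q)).
have run_word q : run act s0 (word q) = q by rewrite /word; case: cid.
exists (word \o enum_val); split=> [i j eq_ij | w].
  apply/enum_val_inj/minimal_eq_run => v.
  rewrite -[enum_val i]run_word -[enum_val j]run_word -!run_cat.
  by apply/idP/idP; rewrite -!accepts; apply eq_ij.
exists (enum_rank (run act s0 w)) => v.
by rewrite /quot /= enum_rankK !accepts !run_cat run_word.
Qed.

End MinimalAutomaton.

Section QuotientAutomaton.
Variables (S : finType) (L : lang S) (n : nat) (f : 'I_n -> seq S).
Hypothesis f_inj : forall i j, lang_eq (quot (f i) L) (quot (f j) L) -> i = j.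
Hypothesis f_onto : forall w, exists i, lang_eq (quot w L) (quot (f i) L).

Definition qstate (w : seq S) : 'I_n := sval (cid (f_onto w)).

Lemma qstateP w : lang_eq (quot w L) (quot (f (qstate w)) L).
Proof. by rewrite /qstate; case: cid. Qed.

Lemma qstate_eq w w' : lang_eq (quot w L) (quot w' L) -> qstate w = qstate w'.
Proof.
move=> ww'; apply: f_inj => y; have := qstateP w y; have := qstateP w' y.
have := ww' y; tauto.
Qed.

Lemma qstate_f i : qstate (f i) = i.
Proof. by apply: f_inj => y; have := qstateP (f i) y; tauto. Qed.

Lemma qstate_cat w x : qstate (f (qstate w) ++ x) = qstate (w ++ x).
Proof. by apply: qstate_eq => y; rewrite /quot -!catA; split; apply qstateP. Qed.

Definition qact (a : S) (i : 'I_n) : 'I_n := qstate (f i ++ [:: a]).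

Definition qacc : pred 'I_n := fun i => `[< L (f i) >].

Lemma run_qact u x : run qact (qstate u) x = qstate (u ++ x).
Proof.
elim: x u => [|a x IH] u /=; first by rewrite cats0.
by rewrite /qact qstate_cat IH -catA.
Qed.

Lemma qaccepts w : L w <-> qacc (run qact (qstate [::]) w).
Proof.
rewrite run_qact /qacc asboolE.
by have := qstateP w [::]; rewrite /quot !cats0.
Qed.

Lemma qreachable i : exists u, run qact (qstate [::]) u = i.
Proof. by exists (f i); rewrite run_qact qstate_f. Qed.

Lemma qacc_run i v : qacc (run qact i v) = `[< L (f i ++ v) >].
Proof.
rewrite -{1}(qstate_f i) run_qact /qacc; apply: asbool_equiv_eq.
by have := qstateP (f i ++ v) [::]; rewrite /quot !cats0; apply: iff_sym.
Qed.

Lemma qdistinguishable i j : i != j ->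
  exists v, qacc (run qact i v) != qacc (run qact j v).
Proof.
move=> /eqP ij; apply/not_existsP => same; apply/ij/f_inj => v.
apply: asbool_eq_equiv; have /negP/negPn/eqP := same v; by rewrite !qacc_run.
Qed.

Lemma quotient_synt_eq x y : synt_eq L x y <-> trans qact x = trans qact y.
Proof. exact: (minimal_synt_eq qaccepts qreachable qdistinguishable). Qed.

Lemma quotient_sink w0 : (forall y, L (w0 ++ y) <-> L w0) ->
  forall a, qact a (qstate w0) = qstate w0.
Proof.
move=> absorbing a; rewrite /qact qstate_cat; apply: qstate_eq => y.
rewrite /quot -catA /=; have := absorbing (a :: y); have := absorbing y; tauto.
Qed.

End QuotientAutomaton.

Lemma absorbing_word_exists (S : finType) (L : lang S) :
  right_ideal L \/ prefix_closed L -> exists w0, forall y, L (w0 ++ y) <-> L w0.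
Proof.
case=> [[[w0 Lw0] idealL] | closedL].
  by exists w0 => y; split=> // _; apply/idealL; exists w0, y.
have [[w0 Lw0] | all_in] := pselect (exists w0, ~ L w0).
  by exists w0 => y; split=> // /closedL.
by exists [::] => y; split=> _; apply: contrapT => notL; apply: all_in; eexists; exact: notL.
Qed.
Lemma quotient_automaton (S : finType) (L : lang S) n :
  kappa L n -> right_ideal L \/ prefix_closed L ->
  exists (act : S -> 'I_n -> 'I_n) (z : 'I_n),
    (forall a, act a z = z) /\ (forall x y, synt_eq L x y <-> trans act x = trans act y).
Proof.
move=> [f [f_inj f_onto]] /absorbing_word_exists[w0 absorbing].
exists (qact f_onto), (qstate f_onto w0); split.
  exact: quotient_sink.
exact: quotient_synt_eq.
Qed.

Lemma sigma_le (S : finType) (L : lang S) n m :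
  kappa L n -> right_ideal L \/ prefix_closed L -> sigma L m -> m <= n ^ n.-1.
Proof.
move=> kap idealL; have [act [z [sink syntE]]] := quotient_automaton kap idealL.
move/(sigma_semigroup syntE) => ->.
apply: leq_trans (subset_leq_card (semigroup_sub_fixing sink)) _.
by rewrite card_fixing card_ord.
Qed.


(** * Letters forced by a complete transition semigroup *)

Lemma uniq_avoiding (T : finType) (x : T) k : k < #|T| ->
  exists s : seq T, [/\ uniq s, size s = k & all (predC1 x) s].
Proof.
move=> lt_k; exists (take k (enum (predC1 x))); split.
- exact/take_uniq/enum_uniq.
- by rewrite size_take -cardE cardC1; case: #|T| lt_k => // m; rewrite ltnS => /minn_idPl.
by apply/allP => y /mem_take; rewrite mem_enum.
Qed.

Section AlphabetBound.
Variables (S Q : finType) (act : S -> Q -> Q) (z : Q).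
Hypothesis sink : forall a, act a z = z.
Hypothesis compl : complete act z.
Local Notation run := (run act).

Lemma run_injective w :
  injective (run^~ w) <-> forall a, a \in w -> injective (act a).
Proof.
elim: w => [|a w IH] /=; first by split=> // _ p q.
split=> [inj_aw b | inj_letters].
  have inj_a : injective (act a) := @inj_compr _ _ _ (run^~ w) _ inj_aw.
  have [g _ ga] := injF_bij inj_a.
  have inj_w : injective (run^~ w).
    by move=> p q e; rewrite -(ga p) -(ga q); congr (act a); apply: inj_aw; rewrite /= !ga.
  by rewrite inE => /predU1P[-> // | bw]; exact: IH.1 inj_w b bw.
apply: (@inj_comp _ _ _ (run^~ w)); last exact/inj_letters/mem_head.
by apply: IH.2 => b bw; apply/inj_letters/mem_behead.
Qed.

Lemma killing_letter_of_word w q : q != z -> run q w = z ->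
  exists a p, p != z /\ act a p = z.
Proof.
elim: w q => [|a w IH] q qz /=; first by move/eqP; rewrite (negPf qz).
by have [aqz | aqz] := eqVneq (act a q) z; [exists a, q | exact: IH].
Qed.

(* A leading permutation letter maps live states onto live states, so it can
   be dropped from the word. *)
Lemma collapsing_letter_of_word w : {homo run^~ w : q / q != z} ->
  ~ injective (run^~ w) ->
  exists b, {homo act b : q / q != z} /\ ~ injective (act b).
Proof.
elim: w => [|a w IH] live_w ninj_w; first by case: ninj_w => p q.
have [/injectiveP inj_a | /injectiveP ninj_a] := boolP (injectiveb (act a)); last first.
  exists a; split=> // q qz; apply: contra (live_w q qz) => /eqP /= ->.
  by rewrite run_sink.
have [g _ ga] := injF_bij inj_a.
apply: IH => [q qz | inj_w]; last exact: ninj_w (inj_comp inj_w inj_a).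
have gqz : g q != z by apply: contra qz => /eqP gq; rewrite -(ga q) gq sink.
by have := live_w _ gqz; rewrite /= ga.
Qed.

Lemma perm_letter : exists a, injective (act a).
Proof.
have [[|a w] // _ hw] := compl (h := id) erefl.
have inj_aw : injective (run^~ (a :: w)) by move=> p q; rewrite !hw.
by exists a; apply: (run_injective _).1 inj_aw _ (mem_head _ _).
Qed.

Lemma killing_letter q : q != z -> exists a p, p != z /\ act a p = z.
Proof.
move=> qz; have [w _ hw] := compl (h := fun=> z) erefl.
exact: killing_letter_of_word qz (hw q).
Qed.

Lemma collapsing_letter p q : p != q -> p != z -> q != z ->
  exists b, {homo act b : r / r != z} /\ ~ injective (act b).
Proof.
move=> pq pz qz; have [w _ hw] : exists2 w, w != [::] & run^~ w =1 merge p q.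
  by apply: compl; rewrite /merge eq_sym (negPf pz).
apply: (collapsing_letter_of_word (w := w)) => [r rz | inj_w].
  by rewrite hw /merge; case: ifP.
by move/negP: (pq); apply; apply/eqP/inj_w; rewrite !hw /merge eqxx eq_sym (negPf pq).
Qed.

(* Were [a] the only permutation letter, the transpositions (p q) and (q r)
   would both be powers of [act a] and would commute. *)
Lemma two_perm_letters p q r : p != q -> q != r -> p != r ->
  p != z -> q != z -> r != z ->
  exists a b, [/\ a != b, injective (act a) & injective (act b)].
Proof.
move=> pq qr pr pz qz rz; have [a inj_a] := perm_letter.
have [/existsP[b /andP[ba /injectiveP inj_b]] | /existsPn no_other] :=
  boolP [exists b, (b != a) && injectiveb (act b)]; first by exists b, a.
have only_a b : injective (act b) -> b = a.
  by move=> /injectiveP inj_b; have := no_other b; rewrite inj_b andbT negbK => /eqP.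
have power u v : u != z -> v != z -> exists m, run^~ (nseq m a) =1 tperm u v.
  move=> uz vz; have [w _ hw] : exists2 w, w != [::] & run^~ w =1 tperm u v.
    by apply: compl; rewrite tpermD // eq_sym.
  have inj_w : injective (run^~ w) by move=> s t; rewrite !hw; apply: perm_inj.
  exists (size w); suff <- : w = nseq (size w) a by [].
  by apply/all_pred1P/allP => b bw; apply/eqP/only_a/((run_injective w).1 inj_w).
have [m1 h1] := power p q pz qz; have [m2 h2] := power q r qz rz.
have : run p (nseq m1 a ++ nseq m2 a) = run p (nseq m2 a ++ nseq m1 a).
  by rewrite -!nseqD addnC.
rewrite !run_cat !h1 !h2 tpermL [tperm q r p]tpermD 1?eq_sym // !tpermL.
by move/eqP; rewrite eq_sym (negPf qr).
Qed.

Definition perm_letters : {set S} := [set a | injectiveb (act a)].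

Definition killing_letters : {set S} := [set a | [exists p, (p != z) && (act a p == z)]].

(* A permutation letter kills no state, so the letters split into permutation
   letters, killing letters, and letters identifying two live states. *)
Lemma card_letter_kinds :
  #|perm_letters| + #|killing_letters| + #|~: (perm_letters :|: killing_letters)| = #|S|.
Proof.
suff disj : perm_letters :&: killing_letters = set0.
  by rewrite -(cardsC (perm_letters :|: killing_letters)) cardsU disj cards0 subn0.
apply/setP => a; rewrite !inE; apply/negP => /andP[/injectiveP inj_a].
case/existsP => p /andP[pz /eqP apz]; move: pz; rewrite -(sink a) in apz.
by rewrite (inj_a _ _ apz) eqxx.
Qed.

Lemma perm_letters_gt0 : 0 < #|perm_letters|.
Proof.
by have [a /injectiveP inj_a] := perm_letter; apply/card_gt0P; exists a; rewrite inE.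
Qed.

Lemma perm_letters_gt1 : 3 < #|Q| -> 1 < #|perm_letters|.
Proof.
move=> /(uniq_avoiding z)[s [uniq_s size_s live_s]].
case: s uniq_s size_s live_s => [|p [|q [|r [|]]]] //=.
rewrite !inE !negb_or => /and3P[/andP[pq pr] qr _] _ /and4P[pz qz rz _].
have [a [b [ab /injectiveP inj_a /injectiveP inj_b]]] := two_perm_letters pq qr pr pz qz rz.
apply: leq_trans (subset_leq_card (_ : [set a; b] \subset perm_letters)).
  by rewrite cards2 ab.
by apply/subsetP => c; rewrite !inE => /orP[] /eqP ->.
Qed.

Lemma killing_letters_gt0 : 1 < #|Q| -> 0 < #|killing_letters|.
Proof.
move=> /(uniq_avoiding z)[s [_ size_s live_s]].
case: s size_s live_s => [|q [|]] //= _; rewrite andbT => qz.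
have [a [p [pz apz]]] := killing_letter qz.
by apply/card_gt0P; exists a; rewrite inE; apply/existsP; exists p; rewrite pz apz /=.
Qed.

Lemma collapsing_letters_gt0 :
  2 < #|Q| -> 0 < #|~: (perm_letters :|: killing_letters)|.
Proof.
move=> /(uniq_avoiding z)[s [uniq_s size_s live_s]].
case: s uniq_s size_s live_s => [|p [|q [|]]] //=.
rewrite !inE andbT => pq _ /and3P[pz qz _].
have [b [live_b /injectiveP ninj_b]] := collapsing_letter pq pz qz.
apply/card_gt0P; exists b; rewrite !inE negb_or ninj_b /=; apply/existsPn => r.
by apply/negP => /andP[rz /eqP brz]; have := live_b r rz; rewrite brz eqxx.
Qed.

Lemma alphabet_bound : minn #|Q| 4 <= #|S|.
Proof.
have := card_letter_kinds; have := perm_letters_gt0; have := perm_letters_gt1.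
have := killing_letters_gt0; have := collapsing_letters_gt0; lia.
Qed.

End AlphabetBound.

Lemma alphabet_lower_bound (S : finType) (L : lang S) n :
  kappa L n -> right_ideal L \/ prefix_closed L -> sigma L (n ^ n.-1) -> minn n 4 <= #|S|.
Proof.
move=> kap idealL; have [act [z [sink syntE]]] := quotient_automaton kap idealL.
move/(sigma_semigroup syntE) => card_sg.
have compl : complete act z.
  apply/(completeE sink)/eqP; rewrite eqEcard (semigroup_sub_fixing sink).
  by rewrite card_fixing card_ord -card_sg leqnn.
by have := alphabet_bound sink compl; rewrite card_ord.
Qed.

(** * Generating the maps that fix the sink *)

Lemma omap_merge (K : finType) (p : {perm K}) (x y q : option K) :
  omap p (merge x y (omap p^-1%g q)) = merge (omap p x) (omap p y) q.
Proof.
have omapK : cancel (omap p^-1%g) (omap p) by case=> //= a; rewrite permKV.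
have omapKV : cancel (omap p) (omap p^-1%g) by case=> //= a; rewrite permK.
rewrite /merge -[q in RHS]omapK (can_eq omapKV).
by case: eqP; rewrite ?omapK.
Qed.

Lemma perm_two_transitive (T : finType) (x1 y1 x2 y2 : T) :
  x1 != y1 -> x2 != y2 -> exists p : {perm T}, p x1 = x2 /\ p y1 = y2.
Proof.
move=> xy1 xy2; pose c := tperm x1 x2 y1.
have cx2 : c != x2 by rewrite /c -{2}(tpermL x1 x2) (inj_eq perm_inj) eq_sym.
exists (tperm x1 x2 * tperm c y2)%g; rewrite !permM tpermL -/c tpermL.
by rewrite tpermD // eq_sym.
Qed.

Lemma omap_perm_of_inj (K : finType) (h : option K -> option K) :
  injective h -> h None = None -> exists p : {perm K}, h =1 omap p.
Proof.
move=> inj_h hN; pose g a := odflt a (h (Some a)).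
have hS a : h (Some a) = Some (g a).
  by rewrite /g; case E: (h (Some a)) => //; rewrite -hN in E; have := inj_h _ _ E.
have inj_g : injective g by move=> a b gab; apply: Some_inj; apply: inj_h; rewrite !hS gab.
by exists (perm inj_g); case=> [a|] //=; rewrite hS permE.
Qed.

Lemma noninjective_moving_pair (T : finType) (h : T -> T) :
  ~ injective h -> exists i j, [/\ i != j, h i = h j & h i != i].
Proof.
move/injectiveP/injectivePn => [i [j ij hij]].
have [hi | hi] := eqVneq (h i) i; last by exists i, j.
by exists j, i; rewrite eq_sym -hij hi.
Qed.

Section Generation.
Variables (S K : finType) (act : S -> option K -> option K).

Lemma realizable_omap_gen (A : {set {perm K}}) :
  (forall p, p \in A -> realizable act (omap p)) ->
  forall p, p \in <<A>>%g -> realizable act (omap p).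
Proof.
move=> realA p /gen_prodgP[m [c cA ->]]; elim: m c cA => [|m IH] c cA.
  by apply: realizable_eq (realizable_id act) _; case=> //= a; rewrite big_ord0 perm1.
rewrite big_ord_recr /=.
apply: realizable_eq (realizable_comp (IH _ (fun i => cA _)) (realA _ (cA ord_max))) _.
by case=> //= a; rewrite permM.
Qed.

Hypothesis perms : forall p : {perm K}, realizable act (omap p).

Lemma realizable_merge_omap (p : {perm K}) x y :
  realizable act (merge x y) -> realizable act (merge (omap p x) (omap p y)).
Proof.
move=> realxy; have := realizable_comp (realizable_comp (perms p^-1%g) realxy) (perms p).
by move/realizable_eq; apply => q; apply: omap_merge.
Qed.

(* Induction on the number of moved states: an injective [h] is a permutation,
   and otherwise [h] is [merge i j] followed by a map that also fixes [i]. *)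
Lemma realizable_fixing_None : (forall x y, x != None -> realizable act (merge x y)) ->
  forall h, h None = None -> realizable act h.
Proof.
move=> merges h; have [N] := ubnP #|[set q | h q != q]|.
elim: N h => // N IH h moved_h hN.
have [/injectiveP inj_h | /injectiveP ninj_h] := boolP (injectiveb h).
  by have [p hp] := omap_perm_of_inj inj_h hN; apply: realizable_eq (perms p) _ => q; rewrite hp.
have [i [j [ij hij hi]]] := noninjective_moving_pair ninj_h.
have iN : i != None by apply: contraNneq hi => ->; rewrite hN.
pose h' r := if r == i then i else h r.
have fewer_moved : #|[set r | h' r != r]| < #|[set r | h r != r]|.
  apply/proper_card/properP; split; last by exists i; rewrite !inE /h' ?eqxx.
  by apply/subsetP => r; rewrite !inE /h'; case: (eqVneq r i) => [-> | //]; rewrite eqxx.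
have : realizable act h'.
  apply: IH; first exact: leq_trans fewer_moved _.
  by rewrite /h' eq_sym (negPf iN).
move/(realizable_comp (merges i j iN))/realizable_eq; apply => r.
rewrite /h' /merge /=; case: (eqVneq r i) => [-> | /negPf ->] //.
by rewrite eq_sym (negPf ij).
Qed.

End Generation.

Lemma Sym_ordS_gen k :
  <<[set tperm ord0 (ordS ord0); perm (@ordS_inj k.+1)]>>%g = [set: {perm 'I_k.+1}].
Proof.
case: k => [|j].
  apply/eqP; rewrite eqEsubset subsetT /=; apply/subsetP => p _.
  suff -> : p = 1%g by apply: group1.
  by apply/permP => x; rewrite perm1 !ord1.
rewrite -(@gen_tpermn_circular_shift j 0%R 1%R); last by rewrite GRing.subr0 coprimen1.
congr <<_>>%g; congr [set _; _]; first by congr tperm; apply/val_inj.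
by apply/permP => x; rewrite !permE; exact: (esym (add_1_Zp (x : 'Z_j.+2))).
Qed.

Lemma tperm_ordS_rotation k : k <= 1 ->
  tperm (ord0 : 'I_k.+1) (ordS ord0) = perm (@ordS_inj k.+1).
Proof.
by case: k => [|[|//]] _; apply/permP => -[[|[|//]] lt_x]; apply/val_inj; rewrite !permE.
Qed.

Section RankAutomaton.
Variables (S : finType) (k : nat).
Hypothesis S_large : minn k.+2 4 <= #|S|.

Definition rotation : {perm 'I_k.+1} := perm (@ordS_inj k.+1).

(* For k = 0 the letters of rank 2 and 3 act as the identity, since
   [ordS ord0 = ord0] in ['I_1]. *)
Definition rank_map (r : nat) : option 'I_k.+1 -> option 'I_k.+1 :=
  match r with
  | 1 => merge (Some ord0) None
  | 2 => merge (Some (ordS ord0)) (Some ord0)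
  | 3 => omap (tperm ord0 (ordS ord0))
  | _ => omap rotation
  end.

Definition rank_act (a : S) := rank_map (enum_rank a).

Lemma rank_act_None a : rank_act a None = None.
Proof. by rewrite /rank_act /rank_map; case: (val _) => [|[|[|[|]]]]. Qed.

Lemma realizable_rank r : r < #|S| -> realizable rank_act (rank_map r).
Proof.
move=> lt_r; have := realizable_letter rank_act (enum_val (Ordinal lt_r)).
by rewrite /rank_act enum_valK.
Qed.

Lemma S_gt1 : 1 < #|S|.
Proof. by apply: leq_trans S_large; rewrite leq_min. Qed.

Lemma realizable_rotation : realizable rank_act (omap rotation).
Proof. exact: realizable_rank (ltnW S_gt1). Qed.

Lemma realizable_swap : realizable rank_act (omap (tperm ord0 (ordS ord0))).
Proof.
have [S_gt3 | S_le3] := ltnP 3 #|S|.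
  exact: realizable_rank S_gt3.
rewrite tperm_ordS_rotation; first exact: realizable_rotation.
by have := leq_trans S_large S_le3; lia.
Qed.

Lemma rank_realizable_perm (p : {perm 'I_k.+1}) : realizable rank_act (omap p).
Proof.
apply: (realizable_omap_gen (A := [set tperm ord0 (ordS ord0); rotation])).
  move=> q; rewrite !inE => /orP[] /eqP ->.
    exact: realizable_swap.
  exact: realizable_rotation.
by rewrite /rotation Sym_ordS_gen inE.
Qed.

Lemma rank_realizable_merge x y : x != None -> realizable rank_act (merge x y).
Proof.
case: x => [a|//] _.
have kill0 : realizable rank_act (merge (Some ord0) None) := realizable_rank S_gt1.
case: y => [b|]; last first.
  have := realizable_merge_omap rank_realizable_perm (tperm ord0 a) kill0.
  by rewrite /= tpermL.
have [<- | ab] := eqVneq a b.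
  by apply: realizable_eq (realizable_id _) _ => q; rewrite /merge; case: eqP.
have k_gt0 : 0 < k.
  by move: (ltn_ord a) (ltn_ord b) ab; rewrite -val_eqE /= => a_lt b_lt /eqP; lia.
have one_ne0 : ordS ord0 != ord0 :> 'I_k.+1 by rewrite -val_eqE /= modn_small.
have S_gt2 : 2 < #|S| by lia.
have merge10 : realizable rank_act (merge (Some (ordS ord0)) (Some ord0)).
  exact: realizable_rank S_gt2.
have [p [p1 p0]] := perm_two_transitive one_ne0 ab.
by have := realizable_merge_omap rank_realizable_perm p merge10; rewrite /= p1 p0.
Qed.

Lemma rank_complete : complete rank_act None.
Proof.
have S_gt0 : 0 < #|S| := ltnW S_gt1.
apply: (complete_of_realizable rank_act_None (a := enum_val (Ordinal S_gt0))).
  by rewrite /rank_act enum_valK; apply/inj_omap/perm_inj.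
exact: realizable_fixing_None rank_realizable_perm rank_realizable_merge.
Qed.

End RankAutomaton.

(** * Languages reaching the bound *)

Definition dfa_lang (S Q : finType) (act : S -> Q -> Q) (s0 : Q) (acc : pred Q) : lang S :=
  fun w => acc (run act s0 w).

Section CompleteAutomaton.
Variables (S Q : finType) (act : S -> Q -> Q) (z s0 : Q).
Hypothesis sink : forall a, act a z = z.
Hypothesis compl : complete act z.
Hypothesis reachable : forall q, exists u, run act s0 u = q.

Lemma complete_distinguishable (acc : pred Q) : (forall q, q != z -> acc q != acc z) ->
  forall p q, p != q -> exists v, acc (run act p v) != acc (run act q v).
Proof.
move=> acc_z p q; have [-> zq | pz pq] := eqVneq p z.
  by exists [::]; rewrite /= eq_sym acc_z // eq_sym.
have [-> | qz] := eqVneq q z; first by exists [::]; apply: acc_z.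
have [w _ hw] : exists2 w, w != [::] & run act ^~ w =1 merge p z.
  by apply: compl; rewrite /merge eq_sym (negPf pz).
by exists w; rewrite !hw /merge eqxx [q == p]eq_sym (negPf pq) eq_sym acc_z.
Qed.

Lemma complete_kappa_sigma (acc : pred Q) : (forall q, q != z -> acc q != acc z) ->
  kappa (dfa_lang act s0 acc) #|Q| /\ sigma (dfa_lang act s0 acc) (#|Q| ^ #|Q|.-1).
Proof.
move=> /complete_distinguishable dist.
have accepts w : dfa_lang act s0 acc w <-> acc (run act s0 w) by [].
split; first exact: minimal_kappa accepts reachable dist.
apply/(sigma_semigroup (minimal_synt_eq accepts reachable dist)).
by rewrite (completeE sink).1 // card_fixing.
Qed.

Lemma dfa_lang_right_ideal : right_ideal (dfa_lang act s0 (pred1 z)).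
Proof.
split; first by have [u uz] := reachable z; exists u; rewrite /dfa_lang /= uz.
move=> w; split=> [Lw | [u [v [-> /eqP Lu]]]]; first by exists w, [::]; rewrite cats0.
by rewrite /dfa_lang /= run_cat Lu run_sink.
Qed.

Lemma dfa_lang_prefix_closed : prefix_closed (dfa_lang act s0 (predC1 z)).
Proof.
by move=> w x; rewrite /dfa_lang /= run_cat; apply: contra => /eqP ->; rewrite run_sink.
Qed.

Lemma complete_automaton_languages :
  (exists L : lang S, right_ideal L /\ kappa L #|Q| /\ sigma L (#|Q| ^ #|Q|.-1)) /\
  (exists L : lang S, prefix_closed L /\ kappa L #|Q| /\ sigma L (#|Q| ^ #|Q|.-1)).
Proof.
split; [exists (dfa_lang act s0 (pred1 z)) | exists (dfa_lang act s0 (predC1 z))].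
  split; first exact: dfa_lang_right_ideal.
  by apply: complete_kappa_sigma => q qz; rewrite /= eqxx (negPf qz).
split; first exact: dfa_lang_prefix_closed.
by apply: complete_kappa_sigma => q qz; rewrite /= eqxx qz.
Qed.

End CompleteAutomaton.

Lemma tight_languages (S : finType) (n : nat) : 1 <= n -> minn n 4 <= #|S| ->
  (exists L : lang S, right_ideal L /\ kappa L n /\ sigma L (n ^ n.-1)) /\
  (exists L : lang S, prefix_closed L /\ kappa L n /\ sigma L (n ^ n.-1)).
Proof.
case: n => [// | [|k]] _ S_large.
  have [a _] : exists a, a \in S by apply/card_gt0P.
  have compl : complete (fun (_ : S) (_ : unit) => tt) tt.
    by move=> h htt; exists [:: a] => // -[]; rewrite htt.
  have reachable (q : unit) : exists u : seq S, run (fun _ _ => tt) tt u = q.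
    by case: q; exists [::].
  have := @complete_automaton_languages S unit (fun _ _ => tt) tt tt (fun _ => erefl).
  by move=> /(_ compl reachable); rewrite card_unit.
have := complete_automaton_languages (@rank_act_None S k) (rank_complete S_large)
  (complete_reachable (s0 := Some ord0) (rank_complete S_large) erefl).
by rewrite card_option card_ord.
Qed.

Theorem theorem2 :
  (* upper bound *)
  (forall (S : finType) (L : lang S) (n m : nat),
      0 < #|S| -> 1 <= n -> kappa L n ->
      (right_ideal L \/ prefix_closed L) ->
      sigma L m -> m <= n ^ n.-1)
  /\
  (* tightness: |S| >= 1,2,3 for n = 1,2,3 and |S| >= 4 for n >= 4 *)
  (forall (S : finType) (n : nat),
      1 <= n -> minn n 4 <= #|S| ->
      (exists L : lang S, right_ideal L /\ kappa L n /\ sigma L (n ^ n.-1)) /\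
      (exists L : lang S, prefix_closed L /\ kappa L n /\ sigma L (n ^ n.-1)))
  /\
  (* alphabet sizes cannot be reduced *)
  (forall (S : finType) (L : lang S) (n : nat),
      0 < #|S| -> 1 <= n -> #|S| < minn n 4 ->
      (right_ideal L \/ prefix_closed L) -> kappa L n ->
      ~ sigma L (n ^ n.-1)).
Proof.
split; first by move=> S L n m _ _; apply: sigma_le.
split; first exact: tight_languages.
move=> S L n _ _ small idealL kap /(alphabet_lower_bound kap idealL).
by rewrite leqNgt small.
Qed.
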